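(* Let $n\ge 2$ be an integer and define $f_n(x)=\frac{(n-x)^{n-1}}{e^{n-x}(n-1)!}$ for $x\le n$ and $f_n(x)=0$ for $x>n$. Then: (i) $f_n$ is unimodal in $x$ with maximum value $f_n(1)$ (attained at $x=1$), and $f_n(1)\sim \frac{1}{\sqrt{2\pi n}}$ as $n\to\infty$; (ii) for every real $x\ge0$, $f_n(1+x)\le f_n(1-x)$; (iii) for every real $z\ge0$ there is a unique real number $b=b(n,z)$ with $0\le b\le z$ and $f_n(1-z)=f_n(1+z-b)$.
   Context: $f_n$ is the density of $X_1+\cdots+X_n$ where the $X_i$ are independent with density $e^{x-1}$ for $x\le1$ and $0$ for $x>1$. *)

From Stdlib Require Import Reals.
From Coquelicot Require Import Coquelicot.
Open Scope R_scope.

Definition f_dens (n : nat) (x : R) : R :=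
  if Rle_dec x (INR n)
  then (INR n - x) ^ (n - 1) / (exp (INR n - x) * INR (Factorial.fact (n - 1)))
  else 0.

(* With E_i = 1 - X_i standard exponential, f_n(x) = g(n - x) for the Gamma(n)
   density g(t) = t^m e^(-t) / m!, m = n - 1.  The ratio
   g(p) / g(q) = exp (m ln (p/q) + q - p) together with ln r < r - 1 shows that g
   increases on [0, m] and decreases on [m, oo), which is (i); the sharper bound
   ln (1 + y) >= 2y / (2 + y) gives g(m - x) <= g(m + x), which is (ii); and (iii)
   is the intermediate value theorem for g on [max 0 (m - z), m], where g is
   injective.  Finally f_n(1) = g(m) = m^m e^(-m) / m!, so the asymptotics is
   Stirling's formula: r_m = ln (m! e^m / (m^m sqrt m)) decreases and stays above
   1/2, and Wallis' integrals give r_(2k) - 2 r_k -> - ln (2 pi) / 2. *)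

From Stdlib Require Import Reals Factorial Lra Lia.
From Coquelicot Require Import Coquelicot.
Open Scope R_scope.

Lemma le_of_derive_nonneg (f df : R -> R) a b : a <= b ->
  (forall x, a <= x <= b -> is_derive f x (df x)) ->
  (forall x, a <= x <= b -> 0 <= df x) -> f a <= f b.
Proof.
intros Hab Hd Hpos. destruct (Req_dec a b) as [->|Hne]; [lra|].
destruct (MVT_cor3 f df a b) as [c [Hac [Hcb Hc]]]; [lra| |].
- intros x Hax Hxb. apply is_derive_Reals, Hd; lra.
- rewrite Hc. assert (0 <= df c) by (apply Hpos; lra). nra.
Qed.

Lemma ln_lt_sub_1 r : 0 < r -> r <> 1 -> ln r < r - 1.
Proof.
intros Hr Hr1. rewrite <- (ln_exp (r - 1)).
apply ln_increasing; [exact Hr|].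
assert (H := exp_ineq1 (r - 1) ltac:(lra)). lra.
Qed.

Lemma ln_1p_ge x : 0 <= x -> 2 * x / (2 + x) <= ln (1 + x).
Proof.
intros Hx.
assert (H := le_of_derive_nonneg (fun y => ln (1 + y) - 2 * y / (2 + y))
               (fun y => y ^ 2 / ((1 + y) * (2 + y) ^ 2)) 0 x Hx).
cbv beta in H. rewrite Rplus_0_r, ln_1 in H.
enough (0 - 2 * 0 / (2 + 0) <= ln (1 + x) - 2 * x / (2 + x)) by (unfold Rdiv in *; lra).
apply H.
- intros y Hy. auto_derive; [lra|]. field. lra.
- intros y Hy. apply Rmult_le_pos; [nra|]. left. apply Rinv_0_lt_compat. nra.
Qed.

Lemma ln_1p_le x : 0 <= x -> ln (1 + x) <= x - x ^ 2 / 2 + x ^ 3 / 3.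
Proof.
intros Hx.
assert (H := le_of_derive_nonneg (fun y => y - y ^ 2 / 2 + y ^ 3 / 3 - ln (1 + y))
               (fun y => y ^ 3 / (1 + y)) 0 x Hx).
cbv beta in H. rewrite Rplus_0_r, ln_1 in H.
enough (0 - 0 ^ 2 / 2 + 0 ^ 3 / 3 - 0 <= x - x ^ 2 / 2 + x ^ 3 / 3 - ln (1 + x))
  by (simpl in *; unfold Rdiv in *; lra).
apply H.
- intros y Hy. auto_derive; [lra|]. field. lra.
- intros y Hy. apply Rmult_le_pos; [nra|]. left. apply Rinv_0_lt_compat. lra.
Qed.

(** * Gamma densities *)

Definition gamma_dens (m : nat) (t : R) : R := t ^ m / (exp t * INR (fact m)).

Lemma gamma_dens_pos m t : 0 < t -> 0 < gamma_dens m t.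
Proof.
intros Ht. apply Rdiv_lt_0_compat; [now apply pow_lt|].
apply Rmult_lt_0_compat; [apply exp_pos | apply INR_fact_lt_0].
Qed.

Lemma gamma_dens_ge0 m t : 0 <= t -> 0 <= gamma_dens m t.
Proof.
intros Ht. apply Rmult_le_pos; [now apply pow_le|]. left.
apply Rinv_0_lt_compat, Rmult_lt_0_compat; [apply exp_pos | apply INR_fact_lt_0].
Qed.

Lemma gamma_dens_0 m : (1 <= m)%nat -> gamma_dens m 0 = 0.
Proof. intros Hm. unfold gamma_dens. rewrite pow_i by lia. unfold Rdiv. ring. Qed.

Lemma gamma_dens_continuous m : continuity (gamma_dens m).
Proof.
intros t.
apply continuity_pt_filterlim, (ex_derive_continuous (K := R_AbsRing) (V := R_NormedModule)).
assert (0 < exp t * INR (fact m))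
  by (apply Rmult_lt_0_compat; [apply exp_pos | apply INR_fact_lt_0]).
unfold gamma_dens. auto_derive. lra.
Qed.

Lemma gamma_dens_ratio m p q : 0 < p -> 0 < q ->
  gamma_dens m p = exp (INR m * ln (p / q) + (q - p)) * gamma_dens m q.
Proof.
intros Hp Hq. unfold gamma_dens.
assert (Hr : exp (INR m * ln (p / q)) = (p / q) ^ m)
  by (apply (Rpower_pow m (p / q)), Rdiv_lt_0_compat; assumption).
unfold Rdiv at 2 in Hr. rewrite exp_plus, Hr, Rpow_mult_distr, pow_inv.
unfold Rminus. rewrite exp_plus, exp_Ropp.
assert (0 < exp p) by apply exp_pos. assert (0 < exp q) by apply exp_pos.
assert (0 < q ^ m) by (now apply pow_lt). assert (Hf := INR_fact_lt_0 m).
field. repeat split; lra.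
Qed.

Lemma gamma_dens_lt_toward_mode m p q : (1 <= m)%nat -> 0 <= p -> 0 < q -> p <> q ->
  (q - p) * (q - INR m) <= 0 -> gamma_dens m p < gamma_dens m q.
Proof.
intros Hm Hp Hq Hpq Hmode. assert (Hgq := gamma_dens_pos m q Hq).
destruct (Req_dec p 0) as [->|Hp0]; [now rewrite gamma_dens_0|].
assert (Hr : 0 < p / q) by (apply Rdiv_lt_0_compat; lra).
assert (Hr1 : p / q <> 1) by (intro E; apply Hpq; field_simplify_eq in E; lra).
assert (Hln := ln_lt_sub_1 _ Hr Hr1).
assert (HmR : 0 < INR m) by (apply lt_0_INR; lia).
(* With r = p / q: m ln r + q - p < m (r - 1) + q - p = (q - p) (q - m) / q. *)
assert (Hexp : INR m * ln (p / q) + (q - p) < 0).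
{ assert (E : INR m * (p / q - 1) + (q - p) = (q - p) * (q - INR m) / q) by (field; lra).
  assert ((q - p) * (q - INR m) / q <= 0).
  { unfold Rdiv. apply Rmult_le_0_r; [lra|]. left. now apply Rinv_0_lt_compat. }
  nra. }
rewrite (gamma_dens_ratio m p q) by lra.
assert (exp (INR m * ln (p / q) + (q - p)) < 1) by (rewrite <- exp_0; now apply exp_increasing).
nra.
Qed.

Lemma gamma_dens_le_toward_mode m p q : (1 <= m)%nat -> 0 <= p -> 0 <= q ->
  (q - p) * (q - INR m) <= 0 -> gamma_dens m p <= gamma_dens m q.
Proof.
intros Hm Hp Hq Hmode. destruct (Req_dec p q) as [->|Hpq]; [lra|].
assert (HmR : 0 < INR m) by (apply lt_0_INR; lia).
left. apply gamma_dens_lt_toward_mode; try assumption.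
destruct Hq as [Hq|<-]; [assumption|]. nra.
Qed.

Lemma gamma_dens_mode_sub_le_add m x : (1 <= m)%nat -> 0 <= x <= INR m ->
  gamma_dens m (INR m - x) <= gamma_dens m (INR m + x).
Proof.
intros Hm [Hx0 Hxm]. assert (HmR : 0 < INR m) by (apply lt_0_INR; lia).
destruct (Req_dec x (INR m)) as [->|Hxm'].
{ rewrite Rminus_diag, gamma_dens_0 by assumption. apply gamma_dens_ge0; lra. }
(* For y = 2x / (m - x): 1 + y = (m + x) / (m - x) and 2y / (2 + y) = 2x / m. *)
set (y := 2 * x / (INR m - x)).
assert (Hy : 0 <= y) by (apply Rmult_le_pos; [lra|]; left; apply Rinv_0_lt_compat; lra).
assert (Hln := ln_1p_ge y Hy).
replace (2 * y / (2 + y)) with (2 * x / INR m) in Hln by (unfold y; field; lra).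
replace (1 + y) with (/ ((INR m - x) / (INR m + x))) in Hln by (unfold y; field; lra).
rewrite ln_Rinv in Hln by (apply Rdiv_lt_0_compat; lra).
rewrite (gamma_dens_ratio m _ (INR m + x)) by lra.
assert (Hexp : INR m * ln ((INR m - x) / (INR m + x)) + (INR m + x - (INR m - x)) <= 0).
{ apply (Rmult_le_compat_l (INR m)) in Hln; [|lra].
  replace (INR m * (2 * x / INR m)) with (2 * x) in Hln by (field; lra). lra. }
assert (exp (INR m * ln ((INR m - x) / (INR m + x)) + (INR m + x - (INR m - x))) <= 1).
{ rewrite <- exp_0.
  destruct Hexp as [Hlt|Heq]; [left; now apply exp_increasing | rewrite Heq; lra]. }
assert (0 <= gamma_dens m (INR m + x)) by (apply gamma_dens_ge0; lra).
nra.
Qed.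

Lemma gamma_dens_inj_below_mode m s t : (1 <= m)%nat ->
  0 <= s <= INR m -> 0 <= t <= INR m -> gamma_dens m s = gamma_dens m t -> s = t.
Proof.
intros Hm Hs Ht E.
assert (Hlt : forall u w, 0 <= u -> u < w -> w <= INR m -> gamma_dens m u < gamma_dens m w)
  by (intros; apply gamma_dens_lt_toward_mode; [assumption | lra | lra | lra | nra]).
destruct (Rtotal_order s t) as [Hst|[Hst|Hst]]; [| exact Hst |].
- assert (gamma_dens m s < gamma_dens m t) by (apply Hlt; lra). lra.
- assert (gamma_dens m t < gamma_dens m s) by (apply Hlt; lra). lra.
Qed.

Lemma gamma_dens_ivt m a v : 0 <= a <= INR m ->
  gamma_dens m a <= v <= gamma_dens m (INR m) ->
  exists t, a <= t <= INR m /\ gamma_dens m t = v.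
Proof.
intros Ha Hv.
destruct (IVT_gen (gamma_dens m) a (INR m) v (gamma_dens_continuous m)) as [t [Ht Hgt]].
- rewrite Rmin_left, Rmax_right; lra.
- rewrite Rmin_left, Rmax_right in Ht by lra. now exists t.
Qed.

Lemma f_dens_gamma m x : x <= INR m + 1 -> f_dens (S m) x = gamma_dens m (INR m + 1 - x).
Proof.
intros Hx. unfold f_dens. rewrite S_INR. replace (S m - 1)%nat with m by lia.
destruct (Rle_dec x (INR m + 1)); [reflexivity | contradiction].
Qed.

Lemma f_dens_above m x : INR m + 1 < x -> f_dens (S m) x = 0.
Proof.
intros Hx. unfold f_dens. rewrite S_INR.
destruct (Rle_dec x (INR m + 1)); [lra | reflexivity].
Qed.

Lemma f_dens_ge0 n x : 0 <= f_dens n x.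
Proof.
unfold f_dens. destruct (Rle_dec x (INR n)); [|lra].
apply Rmult_le_pos; [apply pow_le; lra|]. left.
apply Rinv_0_lt_compat, Rmult_lt_0_compat; [apply exp_pos | apply INR_fact_lt_0].
Qed.

Lemma f_dens_monotone_le_1 n x y : (2 <= n)%nat -> x <= y -> y <= 1 -> f_dens n x <= f_dens n y.
Proof.
intros Hn Hxy Hy. destruct n as [|m]; [lia|].
assert (1 <= INR m) by (apply (le_INR 1); lia).
rewrite !f_dens_gamma by lra. apply gamma_dens_le_toward_mode; [lia | lra | lra | nra].
Qed.

Lemma f_dens_antitone_ge_1 n x y : (2 <= n)%nat -> 1 <= x -> x <= y -> f_dens n y <= f_dens n x.
Proof.
intros Hn Hx Hxy. destruct n as [|m]; [lia|].
assert (1 <= INR m) by (apply (le_INR 1); lia).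
destruct (Rle_lt_dec y (INR m + 1)) as [Hy|Hy].
- rewrite !f_dens_gamma by lra. apply gamma_dens_le_toward_mode; [lia | lra | lra | nra].
- rewrite f_dens_above by lra. apply f_dens_ge0.
Qed.

Lemma f_dens_max_at_1 n x : (2 <= n)%nat -> f_dens n x <= f_dens n 1.
Proof.
intros Hn. destruct (Rle_lt_dec x 1).
- apply f_dens_monotone_le_1; [assumption | lra | lra].
- apply f_dens_antitone_ge_1; [assumption | lra | lra].
Qed.

Lemma f_dens_reflect_le n x : (2 <= n)%nat -> 0 <= x -> f_dens n (1 + x) <= f_dens n (1 - x).
Proof.
intros Hn Hx. destruct n as [|m]; [lia|].
assert (1 <= INR m) by (apply (le_INR 1); lia).
rewrite (f_dens_gamma m (1 - x)) by lra.
replace (INR m + 1 - (1 - x)) with (INR m + x) by ring.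
destruct (Rle_lt_dec (1 + x) (INR m + 1)) as [Hx'|Hx'].
- rewrite f_dens_gamma by lra. replace (INR m + 1 - (1 + x)) with (INR m - x) by ring.
  apply gamma_dens_mode_sub_le_add; [lia | lra].
- rewrite f_dens_above by lra. apply gamma_dens_ge0; lra.
Qed.

Lemma f_dens_balance n z : (2 <= n)%nat -> 0 <= z ->
  exists! b, 0 <= b <= z /\ f_dens n (1 - z) = f_dens n (1 + z - b).
Proof.
intros Hn Hz. destruct n as [|m]; [lia|].
assert (Hm : (1 <= m)%nat) by lia. assert (1 <= INR m) by (apply (le_INR 1); lia).
rewrite (f_dens_gamma m (1 - z)) by lra.
replace (INR m + 1 - (1 - z)) with (INR m + z) by ring.
set (v := gamma_dens m (INR m + z)).
assert (Hv : 0 < v) by (apply gamma_dens_pos; lra).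
set (a := Rmax 0 (INR m - z)).
assert (Ha : 0 <= a <= INR m) by (unfold a; split; [apply Rmax_l | apply Rmax_lub; lra]).
destruct (gamma_dens_ivt m a v Ha) as [t [Ht Hgt]].
{ split.
  - unfold a. apply Rmax_case_strong; intros.
    + rewrite gamma_dens_0 by assumption. lra.
    + apply gamma_dens_mode_sub_le_add; [assumption | lra].
  - apply gamma_dens_le_toward_mode; [assumption | lra | lra | nra]. }
assert (Hza : INR m - z <= a) by apply Rmax_r.
(* b solves the equation iff t = m - z + b solves gamma_dens m t = v in [a, m]. *)
exists (t - (INR m - z)). split.
- split; [lra|]. rewrite f_dens_gamma by lra.
  replace (INR m + 1 - (1 + z - (t - (INR m - z)))) with t by ring. now symmetry.
- intros b [Hb Hfb].
  destruct (Rle_lt_dec (1 + z - b) (INR m + 1)) as [Hin|Hout].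
  + rewrite f_dens_gamma in Hfb by lra.
    replace (INR m + 1 - (1 + z - b)) with (INR m - z + b) in Hfb by ring.
    enough (t = INR m - z + b) by lra.
    apply (gamma_dens_inj_below_mode m); [assumption | lra | lra | congruence].
  + rewrite f_dens_above in Hfb by lra. lra.
Qed.

(** * Wallis integrals *)

Definition wallis (k : nat) : R := RInt (fun x => sin x ^ k) 0 (PI / 2).

Lemma ex_RInt_sin_pow k a b : ex_RInt (fun x => sin x ^ k) a b.
Proof.
apply (ex_RInt_continuous (V := R_CompleteNormedModule)). intros x _.
apply (ex_derive_continuous (K := R_AbsRing) (V := R_NormedModule)). auto_derive. exact I.
Qed.

Lemma is_derive_sin_pow_cos k x : is_derive (fun x => sin x ^ S k * cos x) x
  (INR (S k) * sin x ^ k - INR (S (S k)) * sin x ^ S (S k)).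
Proof.
auto_derive; [exact I|].
change (match k with 0%nat => 1 | S _ => INR k + 1 end) with (INR (S k)).
assert (Hc : cos x * cos x = 1 - sin x * sin x)
  by (pose proof (sin2_cos2 x) as H; unfold Rsqr in H; lra).
transitivity (INR (S k) * sin x ^ k * (cos x * cos x) - sin x * sin x * sin x ^ k); [ring|].
rewrite Hc, !S_INR. simpl pow. ring.
Qed.

Lemma wallis_rec k : INR (S (S k)) * wallis (S (S k)) = INR (S k) * wallis k.
Proof.
assert (Hint : is_RInt (fun x => INR (S k) * sin x ^ k - INR (S (S k)) * sin x ^ S (S k))
                 0 (PI / 2) (INR (S k) * wallis k - INR (S (S k)) * wallis (S (S k)))).
{ apply (is_RInt_minus (V := R_NormedModule)); apply (is_RInt_scal (V := R_NormedModule));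
    apply (RInt_correct (V := R_CompleteNormedModule)), ex_RInt_sin_pow. }
assert (Hftc := is_RInt_derive (V := R_CompleteNormedModule) _ _ 0 (PI / 2)
                  (fun x _ => is_derive_sin_pow_cos k x)).
lapply Hftc.
2:{ intros x _. apply (ex_derive_continuous (K := R_AbsRing) (V := R_NormedModule)).
    auto_derive. exact I. }
intros Hftc'. assert (E := is_RInt_unique _ _ _ _ Hint).
rewrite (is_RInt_unique _ _ _ _ Hftc') in E. cbv beta in E.
rewrite cos_PI2, sin_0, pow_i in E by lia.
change (sin (PI / 2) ^ S k * 0 - 0 * cos 0
        = INR (S k) * wallis k - INR (S (S k)) * wallis (S (S k))) in E.
lra.
Qed.

Lemma wallis_0 : wallis 0 = PI / 2.
Proof. unfold wallis. simpl pow. rewrite RInt_const. rewrite Rminus_0_r. apply Rmult_1_r. Qed.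

Lemma wallis_1 : wallis 1 = 1.
Proof.
assert (H : is_RInt (fun x => sin x ^ 1) 0 (PI / 2) (minus (- cos (PI / 2)) (- cos 0))).
{ apply (is_RInt_derive (fun x => - cos x)).
  - intros x _. auto_derive; [exact I | ring].
  - intros x _. apply (ex_derive_continuous (K := R_AbsRing) (V := R_NormedModule)).
    auto_derive. exact I. }
unfold wallis. rewrite (is_RInt_unique _ _ _ _ H). rewrite cos_PI2, cos_0.
change (- 0 - - 1 = 1). ring.
Qed.

Lemma wallis_S_le k : wallis (S k) <= wallis k.
Proof.
assert (HPI := PI_RGT_0).
apply RInt_le; [lra | apply ex_RInt_sin_pow | apply ex_RInt_sin_pow |].
intros x Hx. assert (0 <= sin x) by (apply sin_ge_0; lra).
assert (sin x <= 1) by apply SIN_bound. assert (0 <= sin x ^ k) by now apply pow_le.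
simpl. nra.
Qed.

(* cbin k = C(2k, k) / 4^k. *)
Fixpoint cbin (k : nat) : R :=
  match k with
  | O => 1
  | S k => cbin k * (2 * INR k + 1) / (2 * INR k + 2)
  end.

Lemma cbin_pos k : 0 < cbin k.
Proof.
induction k as [|k IH]; simpl cbin; [lra|].
assert (0 <= INR k) by apply pos_INR.
apply Rdiv_lt_0_compat; [apply Rmult_lt_0_compat|]; lra.
Qed.

Lemma INR_double k : INR (2 * k) = 2 * INR k.
Proof. rewrite mult_INR. reflexivity. Qed.

Lemma wallis_even k : wallis (2 * k) = PI / 2 * cbin k.
Proof.
induction k as [|k IH]; [simpl; rewrite wallis_0; ring|].
replace (2 * S k)%nat with (S (S (2 * k))) by lia.
assert (H := wallis_rec (2 * k)). rewrite !S_INR, INR_double, IH in H.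
assert (0 <= INR k) by apply pos_INR.
apply (Rmult_eq_reg_l (2 * INR k + 1 + 1)); [|lra].
rewrite H. simpl cbin. field. lra.
Qed.

Lemma wallis_odd k : wallis (2 * k + 1) = / ((2 * INR k + 1) * cbin k).
Proof.
induction k as [|k IH]; [simpl; rewrite wallis_1; field|].
replace (2 * S k + 1)%nat with (S (S (2 * k + 1))) by lia.
assert (H := wallis_rec (2 * k + 1)). rewrite !S_INR, plus_INR, INR_double, IH in H.
assert (0 <= INR k) by apply pos_INR. assert (Hc := cbin_pos k).
apply (Rmult_eq_reg_l (2 * INR k + 1 + 1 + 1)); [|lra].
simpl INR in H. rewrite S_INR, H. simpl cbin. field. split; lra.
Qed.

Lemma cbin_sq_ge k : 2 / ((2 * INR k + 1) * PI) <= cbin k ^ 2.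
Proof.
assert (HPI := PI_RGT_0). assert (Hk := pos_INR k). assert (Hc := cbin_pos k).
assert (H := wallis_S_le (2 * k)). replace (S (2 * k)) with (2 * k + 1)%nat in H by lia.
rewrite wallis_odd, wallis_even in H.
apply (Rmult_le_compat_l ((2 * INR k + 1) * cbin k)) in H; [|nra].
rewrite Rinv_r in H by nra.
replace (cbin k ^ 2)
  with (2 / ((2 * INR k + 1) * PI) * ((2 * INR k + 1) * cbin k * (PI / 2 * cbin k)))
  by (field; lra).
rewrite <- (Rmult_1_r (2 / _)) at 1. apply Rmult_le_compat_l; [|exact H].
left. apply Rdiv_lt_0_compat; nra.
Qed.

Lemma cbin_sq_le k : cbin (S k) ^ 2 <= / (INR (S k) * PI).
Proof.
assert (HPI := PI_RGT_0). assert (Hk := pos_INR k). assert (Hc := cbin_pos k).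
assert (H := wallis_S_le (2 * k + 1)). replace (S (2 * k + 1)) with (2 * S k)%nat in H by lia.
rewrite wallis_odd, wallis_even in H. simpl cbin in H |- *. rewrite S_INR.
set (c := cbin k) in *.
apply (Rmult_le_compat_l (2 * (2 * INR k + 1) * c / (PI * (2 * INR k + 2)))) in H.
2: { left. apply Rdiv_lt_0_compat; nra. }
replace (2 * (2 * INR k + 1) * c / (PI * (2 * INR k + 2))
         * (PI / 2 * (c * (2 * INR k + 1) / (2 * INR k + 2))))
  with ((c * (2 * INR k + 1) / (2 * INR k + 2)) ^ 2) in H by (field; lra).
replace (2 * (2 * INR k + 1) * c / (PI * (2 * INR k + 2)) * / ((2 * INR k + 1) * c))
  with (/ ((INR k + 1) * PI)) in H by (field; repeat split; lra).
exact H.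
Qed.

Lemma is_lim_seq_inv_affine a b : 0 < a -> 0 < b -> is_lim_seq (fun j => / (a * INR j + b)) 0.
Proof.
intros Ha Hb. change (Finite 0) with (Rbar_inv p_infty).
apply is_lim_seq_inv; [|discriminate].
apply (is_lim_seq_plus _ _ p_infty b p_infty); [| apply is_lim_seq_const | reflexivity].
replace p_infty with (Rbar_mult a p_infty) at 1.
- apply is_lim_seq_scal_l, is_lim_seq_INR.
- simpl. destruct (Rle_dec 0 a) as [Ha'|]; [|lra].
  destruct (Rle_lt_or_eq_dec 0 a Ha'); [reflexivity | lra].
Qed.

Lemma is_lim_seq_wallis : is_lim_seq (fun k => INR (S k) * cbin (S k) ^ 2) (/ PI).
Proof.
assert (HPI := PI_RGT_0).
apply (is_lim_seq_le_le (fun k => / PI * (1 - / (2 * INR k + 3))) _ (fun _ => / PI)).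
- intro k. assert (Hk := pos_INR k). split.
  + replace (/ PI * (1 - / (2 * INR k + 3)))
      with (INR (S k) * (2 / ((2 * INR (S k) + 1) * PI))) by (rewrite S_INR; field; lra).
    apply Rmult_le_compat_l, cbin_sq_ge. apply pos_INR.
  + replace (/ PI) with (INR (S k) * / (INR (S k) * PI)) by (rewrite S_INR; field; lra).
    apply Rmult_le_compat_l, cbin_sq_le. apply pos_INR.
- replace (Finite (/ PI)) with (Finite (/ PI * (1 - 0))) by (f_equal; ring).
  apply is_lim_seq_mult', is_lim_seq_minus'; try apply is_lim_seq_const.
  apply is_lim_seq_inv_affine; lra.
- apply is_lim_seq_const.
Qed.

(** * Stirling's formula *)

Definition stirling_rem (m : nat) : R :=
  ln (INR (fact m)) + INR m - (INR m + / 2) * ln (INR m).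

Lemma stirling_rem_step m : (1 <= m)%nat ->
  stirling_rem m - stirling_rem (S m) = (INR m + / 2) * ln (1 + / INR m) - 1.
Proof.
intros Hm. assert (Hx : 1 <= INR m) by (apply (le_INR 1); lia).
assert (Hinv : 0 < / INR m) by (apply Rinv_0_lt_compat; lra).
unfold stirling_rem. rewrite fact_simpl, mult_INR, S_INR.
replace (INR m + 1) with (INR m * (1 + / INR m)) by (field; lra).
assert (Hf := INR_fact_lt_0 m).
rewrite !ln_mult by (try apply Rmult_lt_0_compat; lra).
replace (INR m * (1 + / INR m)) with (INR m + 1) by (field; lra). ring.
Qed.

Lemma stirling_rem_S_le m : (1 <= m)%nat -> stirling_rem (S m) <= stirling_rem m.
Proof.
intros Hm. assert (Hx : 1 <= INR m) by (apply (le_INR 1); lia).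
assert (Hinv : 0 <= / INR m) by (left; apply Rinv_0_lt_compat; lra).
assert (H := stirling_rem_step m Hm).
assert (Hln := ln_1p_ge _ Hinv).
apply (Rmult_le_compat_l (INR m + / 2)) in Hln; [|lra].
replace ((INR m + / 2) * (2 * / INR m / (2 + / INR m))) with 1 in Hln by (field; lra).
lra.
Qed.

Lemma stirling_rem_step_le m : (1 <= m)%nat ->
  stirling_rem m - stirling_rem (S m) <= / (2 * INR m) - / (2 * INR (S m)).
Proof.
intros Hm. assert (Hx : 1 <= INR m) by (apply (le_INR 1); lia).
assert (Hinv : 0 <= / INR m) by (left; apply Rinv_0_lt_compat; lra).
rewrite stirling_rem_step, S_INR by assumption.
assert (Hln := ln_1p_le _ Hinv).
apply (Rmult_le_compat_l (INR m + / 2)) in Hln; [|lra].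
assert (E : (INR m + / 2) * (/ INR m - (/ INR m) ^ 2 / 2 + (/ INR m) ^ 3 / 3) - 1
            - (/ (2 * INR m) - / (2 * (INR m + 1)))
          = - ((5 * INR m + 2) * (INR m - 1)) / (12 * INR m ^ 3 * (INR m + 1))) by (field; lra).
assert (0 <= (5 * INR m + 2) * (INR m - 1) / (12 * INR m ^ 3 * (INR m + 1))).
{ apply Rmult_le_pos; [nra|]. left. apply Rinv_0_lt_compat.
  assert (0 < INR m ^ 3) by (apply pow_lt; lra). nra. }
unfold Rdiv in E, H. lra.
Qed.

Lemma stirling_rem_ge k : 1 / 2 + / (2 * INR (S k)) <= stirling_rem (S k).
Proof.
induction k as [|k IH].
- unfold stirling_rem. simpl. rewrite ln_1. lra.
- assert (H := stirling_rem_step_le (S k) ltac:(lia)). lra.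
Qed.

Lemma stirling_rem_cv : { L : R | is_lim_seq (fun k => stirling_rem (S k)) L }.
Proof.
destruct (decreasing_cv (fun k => stirling_rem (S k))) as [L HL].
- intro k. apply stirling_rem_S_le. lia.
- exists (- (1 / 2)). intros x [k ->]. unfold opp_seq.
  assert (H := stirling_rem_ge k).
  assert (0 < / (2 * INR (S k)))
    by (apply Rinv_0_lt_compat; rewrite S_INR; pose proof (pos_INR k); lra).
  lra.
- exists L. now apply is_lim_seq_Reals.
Qed.

Lemma fact_double k : INR (fact (2 * k)) = cbin k * 4 ^ k * INR (fact k) ^ 2.
Proof.
induction k as [|k IH]; [simpl; ring|].
replace (2 * S k)%nat with (S (S (2 * k))) by lia.
rewrite !fact_simpl, !mult_INR, IH, !S_INR, INR_double.
assert (0 <= INR k) by apply pos_INR.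
simpl cbin. simpl pow. field. lra.
Qed.

Lemma stirling_rem_double k : (1 <= k)%nat ->
  stirling_rem (2 * k) - 2 * stirling_rem k = (ln (INR k * cbin k ^ 2) - ln 2) / 2.
Proof.
intros Hk. assert (Hk' : 0 < INR k) by (apply lt_0_INR; lia).
assert (Hc := cbin_pos k). assert (Hf := INR_fact_lt_0 k).
unfold stirling_rem. rewrite fact_double, INR_double.
rewrite !ln_mult by (try apply Rmult_lt_0_compat; try apply pow_lt; lra).
rewrite !ln_pow by lra.
replace 4 with (2 * 2) by ring. rewrite ln_mult by lra.
replace (INR 2) with 2 by reflexivity. field.
Qed.

Lemma is_lim_stirling_rem : is_lim_seq (fun k => stirling_rem (S k)) (ln (2 * PI) / 2).
Proof.
assert (HPI := PI_RGT_0).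
destruct stirling_rem_cv as [L HL].
assert (Hdiff : is_lim_seq (fun k => stirling_rem (2 * S k) - 2 * stirling_rem (S k))
                  (L - 2 * L)).
{ apply is_lim_seq_minus'; [|now apply (is_lim_seq_scal_l _ 2 L)].
  apply (is_lim_seq_ext (fun k => stirling_rem (S (2 * k + 1)))); [intro k; f_equal; lia|].
  apply (is_lim_seq_subseq (fun k => stirling_rem (S k)) L (fun k => 2 * k + 1)%nat);
    [|exact HL].
  apply eventually_subseq. intro k. lia. }
assert (Hwallis : is_lim_seq (fun k => stirling_rem (2 * S k) - 2 * stirling_rem (S k))
                    ((ln (/ PI) - ln 2) / 2)).
{ apply (is_lim_seq_ext (fun k => (ln (INR (S k) * cbin (S k) ^ 2) - ln 2) / 2)).
  { intro k. symmetry. apply stirling_rem_double. lia. }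
  apply is_lim_seq_div'; [|apply is_lim_seq_const | lra].
  apply is_lim_seq_minus'; [|apply is_lim_seq_const].
  apply is_lim_seq_continuous; [|exact is_lim_seq_wallis].
  apply continuity_pt_filterlim, continuous_ln, Rinv_0_lt_compat, HPI. }
assert (E := is_lim_seq_unique _ _ Hdiff). rewrite (is_lim_seq_unique _ _ Hwallis) in E.
injection E as E. rewrite ln_Rinv in E by lra.
replace (ln (2 * PI) / 2) with L; [exact HL|]. rewrite ln_mult by lra. lra.
Qed.

Lemma gamma_dens_at_mode m : (1 <= m)%nat ->
  gamma_dens m (INR m) = / (exp (stirling_rem m) * sqrt (INR m)).
Proof.
intros Hm. assert (Hx : 0 < INR m) by (apply lt_0_INR; lia).
assert (Hf := INR_fact_lt_0 m). assert (Hp : 0 < INR m ^ m) by (now apply pow_lt).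
rewrite <- Rpower_sqrt by lra. unfold Rpower, stirling_rem. rewrite <- exp_plus.
replace (ln (INR (fact m)) + INR m - (INR m + / 2) * ln (INR m) + / 2 * ln (INR m))
  with (ln (INR (fact m)) + INR m + - ln (INR m ^ m)) by (rewrite ln_pow by lra; ring).
rewrite !exp_plus, exp_Ropp, !exp_ln by lra.
assert (0 < exp (INR m)) by apply exp_pos.
unfold gamma_dens. field. repeat split; lra.
Qed.

Lemma is_lim_seq_stirling :
  is_lim_seq (fun m => gamma_dens (S m) (INR (S m)) * sqrt (2 * PI * INR (S m))) 1.
Proof.
assert (HPI := PI_RGT_0).
apply (is_lim_seq_ext (fun m => sqrt (2 * PI) / exp (stirling_rem (S m)))).
{ intro m. assert (Hm : 0 < INR (S m)) by (apply lt_0_INR; lia).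
  assert (0 < sqrt (INR (S m))) by now apply sqrt_lt_R0.
  assert (0 < exp (stirling_rem (S m))) by apply exp_pos.
  rewrite gamma_dens_at_mode, (sqrt_mult (2 * PI)) by (lia || lra). field. lra. }
replace (Finite 1) with (Finite (sqrt (2 * PI) / exp (ln (2 * PI) / 2))).
- apply is_lim_seq_div'; [apply is_lim_seq_const | | apply Rgt_not_eq, exp_pos].
  apply is_lim_seq_continuous; [|exact is_lim_stirling_rem].
  apply continuity_pt_filterlim, continuous_exp.
- f_equal. rewrite <- Rpower_sqrt by lra. unfold Rpower.
  rewrite (Rmult_comm (/ 2)). apply Rinv_r, Rgt_not_eq, exp_pos.
Qed.

Lemma f_dens_1_asymptotic :
  is_lim_seq (fun n => f_dens n 1 / (1 / sqrt (2 * PI * INR n))) 1.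
Proof.
assert (HPI := PI_RGT_0).
apply (is_lim_seq_incr_n _ 2).
apply (is_lim_seq_ext (fun m => gamma_dens (S m) (INR (S m)) * sqrt (2 * PI * INR (S m))
                                 * sqrt (INR (S (S m)) / INR (S m)))).
{ intro m. replace (m + 2)%nat with (S (S m)) by lia.
  assert (Hm := pos_INR m). rewrite f_dens_gamma by (rewrite S_INR; lra).
  replace (INR (S m) + 1 - 1) with (INR (S m)) by ring.
  rewrite Rmult_assoc, <- sqrt_mult.
  2: { rewrite S_INR. nra. }
  2: { apply Rdiv_le_0_compat; [apply pos_INR | apply lt_0_INR; lia]. }
  replace (2 * PI * INR (S m) * (INR (S (S m)) / INR (S m))) with (2 * PI * INR (S (S m)))
    by (rewrite !S_INR; field; lra).
  assert (0 < sqrt (2 * PI * INR (S (S m)))) by (apply sqrt_lt_R0; rewrite !S_INR; nra).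
  field. lra. }
replace (Finite 1) with (Finite (1 * sqrt 1)) by (rewrite sqrt_1; f_equal; ring).
apply is_lim_seq_mult'; [exact is_lim_seq_stirling|].
apply is_lim_seq_continuous; [apply continuity_pt_sqrt; lra|].
apply (is_lim_seq_ext (fun m => 1 + / (1 * INR m + 1))).
{ intro m. assert (Hm := pos_INR m). rewrite !S_INR. field. lra. }
replace (Finite 1) with (Finite (1 + 0)) by (f_equal; ring).
apply is_lim_seq_plus'; [apply is_lim_seq_const | apply is_lim_seq_inv_affine; lra].
Qed.

Theorem lemma3 :
  (* (i) unimodality with maximum at x = 1 *)
  (forall n : nat, (2 <= n)%nat ->
     (forall x y : R, x <= y -> y <= 1 -> f_dens n x <= f_dens n y) /\
     (forall x y : R, 1 <= x -> x <= y -> f_dens n y <= f_dens n x) /\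
     (forall x : R, f_dens n x <= f_dens n 1)) /\
  (* (i) f_n(1) ~ 1/sqrt(2 pi n) as n -> oo *)
  is_lim_seq (fun n : nat => f_dens n 1 / (1 / sqrt (2 * PI * INR n))) 1 /\
  (* (ii) *)
  (forall n : nat, (2 <= n)%nat ->
     forall x : R, 0 <= x -> f_dens n (1 + x) <= f_dens n (1 - x)) /\
  (* (iii) *)
  (forall n : nat, (2 <= n)%nat ->
     forall z : R, 0 <= z ->
       exists! b : R, 0 <= b <= z /\ f_dens n (1 - z) = f_dens n (1 + z - b)).
Proof.
split; [|split; [|split]].
- intros n Hn. split; [|split].
  + intros x y. now apply f_dens_monotone_le_1.
  + intros x y. now apply f_dens_antitone_ge_1.
  + intros x. now apply f_dens_max_at_1.
- exact f_dens_1_asymptotic.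
- intros n Hn x. now apply f_dens_reflect_le.
- intros n Hn z. now apply f_dens_balance.
Qed.
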